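(* Let $f_1,\dots,f_n:\mathbb{R}^d\to\mathbb{R}$ be such that each $f_i$ is $L_i$-smooth and $\mu_i$-strongly convex with minimizer $x_i$. Let $\alpha\in(0,1)$ and $\tilde f(x) = \frac{1}{n}\sum_{i=1}^n f_i(\alpha x + (1-\alpha)x_i)$, with minimizer $x^*$. Let $\overline{\mu} = \frac{1}{n}\sum_i\mu_i$. Then for any $x^0\in\mathbb{R}^d$, \[ \|x^0 - x^*\|^2 \leq \frac{1}{\overline{\mu}}\cdot\frac{1}{n}\sum_{i=1}^n L_i\|x^0 - x_i\|^2. \]
   Context: A differentiable $g$ is $L$-smooth if $\|\nabla g(x)-\nabla g(y)\|\leq L\|x-y\|$ for all $x,y$, and $\mu$-strongly convex if $g(x)\geq g(y)+\langle\nabla g(y),x-y\rangle+\frac{\mu}{2}\|x-y\|^2$ for all $x,y$. *)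

From HB Require Import structures.
From mathcomp Require Import all_boot all_order all_algebra.
From mathcomp Require Import all_classical all_reals all_analysis.
Set Implicit Arguments. Unset Strict Implicit. Unset Printing Implicit Defensive.
Import Order.TTheory GRing.Theory Num.Theory.
Import numFieldNormedType.Exports.
Local Open Scope ring_scope.

Definition dotp {R : realType} {d : nat} (u v : 'rV[R]_d) : R :=
  \sum_(j < d) u ord0 j * v ord0 j.

Definition enorm {R : realType} {d : nat} (u : 'rV[R]_d) : R :=
  Num.sqrt (dotp u u).

(* gradient of f at x: the vector of values of the (Frechet) differential
   on the standard basis vectors, so that 'd f x h = dotp (gradient f x) h *)
Definition gradient {R : realType} {d : nat} (f : 'rV[R]_d -> R^o) (x : 'rV[R]_d)
  : 'rV[R]_d := \row_(j < d) ('d f x) (delta_mx ord0 j).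

Definition L_smooth {R : realType} {d : nat} (f : 'rV[R]_d -> R^o) (L : R) : Prop :=
  (forall x, differentiable f x) /\
  forall x y, enorm (gradient f x - gradient f y) <= L * enorm (x - y).

Definition strongly_convex {R : realType} {d : nat} (f : 'rV[R]_d -> R^o) (mu : R)
  : Prop :=
  (forall x, differentiable f x) /\
  forall x y, f y + dotp (gradient f y) (x - y) + mu / 2 * enorm (x - y) ^+ 2 <= f x.

Definition is_minimizer {R : realType} {d : nat} (f : 'rV[R]_d -> R) (x : 'rV[R]_d)
  : Prop := forall y, f x <= f y.

From HB Require Import structures.
From mathcomp Require Import all_boot all_order all_algebra.
From mathcomp Require Import all_classical all_reals all_analysis.
From mathcomp Require Import ring lra.
Import Order.TTheory GRing.Theory Num.Theory.
Import numFieldNormedType.Exports.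
Local Open Scope ring_scope.

(* Write G for the averaged objective.  Each x |-> f_i (alpha x + (1 - alpha) x_i)
   satisfies the chord inequality of (alpha^2 mu_i)-strong convexity, hence G
   satisfies it with constant alpha^2 mu_bar and grows quadratically away from
   its minimizer: alpha^2 mu_bar / 2 * |x0 - x*|^2 <= G x0 - G x*.  On the
   other side, f_i (alpha x* + (1 - alpha) x_i) >= f_i x_i, and the descent
   lemma at the critical point x_i bounds
   f_i (alpha x0 + (1 - alpha) x_i) - f_i x_i by alpha^2 L_i / 2 * |x0 - x_i|^2.
   No integration is needed: cutting the segment into N steps, each controlled
   by convexity and the Lipschitz gradient, proves the descent lemma up to a
   factor 1 + 1/N, which disappears as N grows. *)

Lemma ler_add_divn (F : archiRealFieldType) (x y c : F) :
  (forall N, (0 < N)%N -> x <= y + c / N%:R) -> x <= y.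
Proof.
move=> H; apply/ler_addgt0Pr => e e_gt0.
have [c_le0|c_gt0] := lerP c 0.
  apply: le_trans (H 1%N isT) _; rewrite divr1 lerD2l.
  exact: le_trans c_le0 (ltW e_gt0).
have ce_gt0 : 0 < c / e by rewrite divr_gt0.
have ce_lt := archi_boundP (ltW ce_gt0).
set N := Num.bound (c / e) in ce_lt.
have N_gt0 : (0 < N)%N by rewrite -(ltr0n F); apply: lt_trans ce_lt.
apply: le_trans (H N N_gt0) _; rewrite lerD2l ler_pdivrMr ?ltr0n // mulrC.
by rewrite -ler_pdivrMr // ltW.
Qed.

Section EuclideanRowSpace.
Context {R : realType} {d : nat}.
Implicit Types (u v w : 'rV[R]_d) (a b : R).

Lemma dotpC u v : dotp u v = dotp v u.
Proof. by apply: eq_bigr => j _; rewrite mulrC. Qed.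

Lemma dotp0l v : dotp 0 v = 0.
Proof. by apply: big1 => j _; rewrite mxE mul0r. Qed.

Lemma dotpDl u v w : dotp (u + v) w = dotp u w + dotp v w.
Proof. by rewrite /dotp -big_split; apply: eq_bigr => j _; rewrite mxE mulrDl. Qed.

Lemma dotpZl a u v : dotp (a *: u) v = a * dotp u v.
Proof. by rewrite /dotp mulr_sumr; apply: eq_bigr => j _; rewrite mxE mulrA. Qed.

Lemma dotpBl u v w : dotp (u - v) w = dotp u w - dotp v w.
Proof. by rewrite -scaleN1r dotpDl dotpZl mulN1r. Qed.

Lemma dotpZr a u v : dotp u (a *: v) = a * dotp u v.
Proof. by rewrite dotpC dotpZl dotpC. Qed.

Lemma dotpNr u v : dotp u (- v) = - dotp u v.
Proof. by rewrite -scaleN1r dotpZr mulN1r. Qed.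

Lemma dotpBr u v w : dotp u (v - w) = dotp u v - dotp u w.
Proof. by rewrite dotpC dotpBl !(dotpC u). Qed.

Lemma dotpp_ge0 u : 0 <= dotp u u.
Proof. by apply: sumr_ge0 => j _; rewrite -expr2 sqr_ge0. Qed.

Lemma dotpp_eq0 u : (dotp u u == 0) = (u == 0).
Proof.
apply/idP/eqP => [/eqP uu0|->]; last by rewrite dotp0l.
apply/rowP => j; rewrite mxE; apply/eqP; rewrite -sqrf_eq0 expr2; apply/eqP.
by move/psumr_eq0P : uu0 => -> // k _; rewrite -expr2 sqr_ge0.
Qed.

Lemma enorm_ge0 u : 0 <= enorm u.
Proof. exact: sqrtr_ge0. Qed.

Lemma enorm_gt0 u : (0 < enorm u) = (u != 0).
Proof. by rewrite sqrtr_gt0 lt0r dotpp_eq0 dotpp_ge0 andbT. Qed.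

Lemma enorm_sqr u : enorm u ^+ 2 = dotp u u.
Proof. by rewrite sqr_sqrtr // dotpp_ge0. Qed.

Lemma enormZ a u : enorm (a *: u) = `|a| * enorm u.
Proof. by rewrite /enorm dotpZl dotpZr mulrA -expr2 sqrtrM ?sqr_ge0 // sqrtr_sqr. Qed.

Lemma enormZ_sqr a u : enorm (a *: u) ^+ 2 = a ^+ 2 * enorm u ^+ 2.
Proof. by rewrite enormZ exprMn real_normK ?num_real. Qed.

Lemma dotp_le_enorm u v : dotp u v <= enorm u * enorm v.
Proof.
have [->|u0] := eqVneq u 0; first by rewrite dotp0l mulr_ge0 // enorm_ge0.
have [->|v0] := eqVneq v 0; first by rewrite dotpC dotp0l mulr_ge0 // enorm_ge0.
have uv_gt0 : 0 < enorm u * enorm v by rewrite mulr_gt0 // enorm_gt0.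
have := dotpp_ge0 (enorm v *: u - enorm u *: v).
rewrite dotpBl !dotpBr !dotpZl !dotpZr -!enorm_sqr (dotpC v u).
nra.
Qed.

Lemma strongly_convexW {f : 'rV[R]_d -> R^o} {mu mu'} :
  mu' <= mu -> strongly_convex f mu -> strongly_convex f mu'.
Proof.
move=> le_mu [df hf]; split=> // x y; apply: le_trans (hf x y).
by rewrite lerD2l ler_wpM2r ?sqr_ge0 // ler_pM2r.
Qed.

Lemma convex_sub_le_dotp {f : 'rV[R]_d -> R^o} x y :
  strongly_convex f 0 -> f y - f x <= dotp (gradient f y) (y - x).
Proof.
move=> [_ hf]; have := hf x y.
rewrite !mul0r addr0 -opprB dotpNr.
lra.
Qed.

Lemma minimizer_gradient_eq0 {f : 'rV[R]_d -> R^o} {L x} :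
  L_smooth f L -> strongly_convex f 0 -> is_minimizer f x -> gradient f x = 0.
Proof.
move=> [_ hL] hf hx; set g := gradient f x.
set t := (`|L| + 1)^-1.
have t_gt0 : 0 < t by rewrite invr_gt0 ltr_wpDl.
have Lt_lt1 : L * t < 1.
  rewrite ltr_pdivrMr ?ltr_wpDl // mul1r.
  by rewrite (le_lt_trans (ler_norm L)) // ltrDl.
set z := x - t *: g.
have xz : x - z = t *: g by rewrite /z opprB addrC subrK.
have gz_le0 : dotp (gradient f z) g <= 0.
  have := convex_sub_le_dotp x z hf; rewrite -[z - x]opprB xz dotpNr dotpZr.
  have := hx z; rewrite -(pmulr_rle0 _ t_gt0); lra.
have gg_le : dotp g g <= L * t * dotp g g.
  have split_gg : dotp g g = dotp (g - gradient f z) g + dotp (gradient f z) g.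
    by rewrite dotpBl subrK.
  rewrite {1}split_gg -[leRHS]addr0; apply: lerD _ gz_le0.
  apply: le_trans (dotp_le_enorm _ _) _.
  rewrite -enorm_sqr expr2 mulrA ler_wpM2r ?enorm_ge0 //.
  by apply: le_trans (hL x z) _; rewrite xz enormZ gtr0_norm // mulrA.
apply/eqP; rewrite -dotpp_eq0 eq_le dotpp_ge0 andbT.
have Lt_gt0 : 0 < 1 - L * t by rewrite subr_gt0.
by rewrite -(pmulr_rle0 _ Lt_gt0) mulrBl mul1r subr_le0.
Qed.

Lemma convex_smooth_step {f : 'rV[R]_d -> R^o} {L x} v {a b} :
  L_smooth f L -> strongly_convex f 0 -> gradient f x = 0 -> 0 <= b -> a <= b ->
  f (x + b *: v) - f (x + a *: v) <= L * b * (b - a) * enorm v ^+ 2.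
Proof.
move=> [_ hL] hf gx0 b_ge0 le_ab; set y := x + b *: v.
apply: le_trans (convex_sub_le_dotp (x + a *: v) y hf) _.
have -> : y - (x + a *: v) = (b - a) *: v.
  by rewrite /y opprD addrACA subrr add0r -scalerBl.
rewrite dotpZr; have -> : dotp (gradient f y) v = dotp (gradient f y - gradient f x) v.
  by rewrite gx0 subr0.
rewrite [leRHS](_ : _ = (b - a) * (L * b * enorm v ^+ 2)); last by ring.
rewrite ler_wpM2l ?subr_ge0 //; apply: le_trans (dotp_le_enorm _ _) _.
rewrite expr2 mulrA ler_wpM2r ?enorm_ge0 //; apply: le_trans (hL y x) _.
by rewrite /y addrC addKr enormZ ger0_norm // mulrA.
Qed.

Lemma convex_smooth_descent {f : 'rV[R]_d -> R^o} {L x} y :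
  L_smooth f L -> strongly_convex f 0 -> gradient f x = 0 ->
  f y - f x <= L / 2 * enorm (y - x) ^+ 2.
Proof.
move=> hL hf gx0; set v := y - x; set c := L / 2 * enorm v ^+ 2.
apply: (@ler_add_divn _ _ _ c) => N N_gt0.
have N_neq0 : N%:R != 0 :> R by rewrite pnatr_eq0 -lt0n.
pose s (m : nat) : R := m%:R / N%:R.
have partial m : f (x + s m *: v) - f x <= c * (s m ^+ 2 + s m / N%:R).
  elim: m => [|m IHm].
    by rewrite /s !mul0r scale0r addr0 subrr expr2 !mul0r addr0 mulr0.
  have s_ge0 : 0 <= s m.+1 by rewrite divr_ge0.
  have s_le : s m <= s m.+1 by rewrite ler_pM2r ?invr_gt0 ?ltr0n // ler_nat.
  have step := convex_smooth_step v hL hf gx0 s_ge0 s_le.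
  have -> : c * (s m.+1 ^+ 2 + s m.+1 / N%:R) =
      L * s m.+1 * (s m.+1 - s m) * enorm v ^+ 2 + c * (s m ^+ 2 + s m / N%:R).
    by rewrite /c /s -addn1 natrD; field.
  lra.
have := partial N.
by rewrite /s divff // scale1r /v addrCA subrr addr0 expr1n mulrDr mulr1 mul1r.
Qed.

Lemma convex_smooth_minimizer_gap {f : 'rV[R]_d -> R^o} {L x} y z :
  L_smooth f L -> strongly_convex f 0 -> is_minimizer f x ->
  f y - f z <= L / 2 * enorm (y - x) ^+ 2.
Proof.
move=> hL hf hx; apply: le_trans (convex_smooth_descent y hL hf _).
  by rewrite lerD2l lerN2.
exact: minimizer_gradient_eq0 hL hf hx.
Qed.

Definition strongly_convex_comb (g : 'rV[R]_d -> R) (mu : R) : Prop :=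
  forall u v t, 0 <= t <= 1 ->
  g (t *: u + (1 - t) *: v) + mu / 2 * (t * (1 - t)) * enorm (u - v) ^+ 2
    <= t * g u + (1 - t) * g v.

Lemma strongly_convex_comb_of_gradient (f : 'rV[R]_d -> R^o) mu :
  strongly_convex f mu -> strongly_convex_comb f mu.
Proof.
move=> [_ hf] u v t /andP[t_ge0 t_le1]; set w := t *: u + (1 - t) *: v.
set P := dotp (gradient f w) (u - v); set e := enorm (u - v) ^+ 2.
have hu : f w + (1 - t) * P + mu / 2 * ((1 - t) ^+ 2 * e) <= f u.
  have uw : u - w = (1 - t) *: (u - v) by apply/rowP => j; rewrite !mxE; ring.
  by have := hf u w; rewrite uw dotpZr enormZ_sqr.
have hv : f w - t * P + mu / 2 * (t ^+ 2 * e) <= f v.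
  have vw : v - w = (- t) *: (u - v) by apply/rowP => j; rewrite !mxE; ring.
  by have := hf v w; rewrite vw dotpZr enormZ_sqr sqrrN mulNr.
have t'_ge0 : 0 <= 1 - t by rewrite subr_ge0.
have := ler_wpM2l t_ge0 hu; have := ler_wpM2l t'_ge0 hv.
lra.
Qed.

Lemma strongly_convex_comb_affine g mu alpha c :
  strongly_convex_comb g mu ->
  strongly_convex_comb (fun x => g (alpha *: x + c)) (alpha ^+ 2 * mu).
Proof.
move=> hg u v t t01.
have -> : alpha ^+ 2 * mu / 2 * (t * (1 - t)) * enorm (u - v) ^+ 2 =
    mu / 2 * (t * (1 - t)) * (alpha ^+ 2 * enorm (u - v) ^+ 2) by ring.
have := hg (alpha *: u + c) (alpha *: v + c) t t01.
have -> : t *: (alpha *: u + c) + (1 - t) *: (alpha *: v + c) =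
    alpha *: (t *: u + (1 - t) *: v) + c by apply/rowP => j; rewrite !mxE; ring.
by rewrite opprD addrACA subrr addr0 -scalerBr enormZ_sqr.
Qed.

Lemma strongly_convex_comb_sum (I : finType) (g : I -> 'rV[R]_d -> R) mu :
  (forall i, strongly_convex_comb (g i) (mu i)) ->
  strongly_convex_comb (fun x => \sum_i g i x) (\sum_i mu i).
Proof.
move=> hg u v t t01; rewrite !mulr_suml !mulr_sumr -!big_split /=.
by apply: ler_sum => i _; exact: hg.
Qed.

Lemma strongly_convex_comb_scale g mu k :
  0 <= k -> strongly_convex_comb g mu ->
  strongly_convex_comb (fun x => k * g x) (k * mu).
Proof.
move=> k_ge0 hg u v t t01; have := ler_wpM2l k_ge0 (hg u v t t01).
lra.
Qed.

Lemma strongly_convex_comb_growth {g mu} x {xstar} :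
  strongly_convex_comb g mu -> is_minimizer g xstar ->
  mu / 2 * enorm (x - xstar) ^+ 2 <= g x - g xstar.
Proof.
move=> hg hmin; set c := mu / 2 * enorm (x - xstar) ^+ 2.
apply: (@ler_add_divn _ _ _ c) => N N_gt0; set t := N%:R^-1.
have t_gt0 : 0 < t by rewrite invr_gt0 ltr0n.
have t_le1 : t <= 1 by rewrite invf_le1 ?ler1n ?ltr0n.
have t01 : 0 <= t <= 1 by rewrite ltW ?t_le1.
rewrite -(ler_pM2l t_gt0) /c.
have := hg x xstar t t01; have := hmin (t *: x + (1 - t) *: xstar).
lra.
Qed.

End EuclideanRowSpace.

Theorem proposition5 (R : realType) (d n : nat) (hn : (0 < n)%N)
  (f : 'I_n -> 'rV[R]_d -> R^o) (L mu : 'I_n -> R) (xs : 'I_n -> 'rV[R]_d)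
  (hmu : forall i, 0 < mu i)
  (hsmooth : forall i, L_smooth (f i) (L i))
  (hconv : forall i, strongly_convex (f i) (mu i))
  (hmin : forall i, is_minimizer (f i) (xs i))
  (alpha : R) (halpha : 0 < alpha < 1)
  (xstar : 'rV[R]_d)
  (hxstar : is_minimizer
     (fun x => n%:R^-1 * \sum_(i < n) f i (alpha *: x + (1 - alpha) *: xs i)) xstar)
  (x0 : 'rV[R]_d) :
  enorm (x0 - xstar) ^+ 2 <=
    (n%:R^-1 * \sum_(i < n) mu i)^-1 *
      (n%:R^-1 * \sum_(i < n) L i * enorm (x0 - xs i) ^+ 2).
Proof.
move: halpha => /andP[alpha_gt0 _].
have n_inv_ge0 : 0 <= n%:R^-1 :> R by rewrite invr_ge0 ler0n.
have mu_sum_gt0 : 0 < \sum_(i < n) mu i.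
  apply: lt_le_trans (hmu (Ordinal hn)) _.
  by rewrite (bigD1 (Ordinal hn)) //= lerDl sumr_ge0 // => i _; exact: ltW.
have convex i : strongly_convex (f i) 0 := strongly_convexW (ltW (hmu i)) (hconv i).
pose G x := n%:R^-1 * \sum_(i < n) f i (alpha *: x + (1 - alpha) *: xs i).
have G_comb : strongly_convex_comb G (n%:R^-1 * \sum_(i < n) alpha ^+ 2 * mu i).
  apply: strongly_convex_comb_scale => //; apply: strongly_convex_comb_sum => i.
  exact/strongly_convex_comb_affine/strongly_convex_comb_of_gradient.
have growth := strongly_convex_comb_growth x0 G_comb hxstar.
have gap : G x0 - G xstar <=
    n%:R^-1 * \sum_(i < n) alpha ^+ 2 / 2 * (L i * enorm (x0 - xs i) ^+ 2).
  rewrite /G -mulrBr -sumrB ler_wpM2l //; apply: ler_sum => i _.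
  apply: le_trans (convex_smooth_minimizer_gap _ _ (hsmooth i) (convex i) (hmin i)) _.
  rewrite (_ : _ - xs i = alpha *: (x0 - xs i)); last first.
    by apply/rowP => j; rewrite !mxE; ring.
  rewrite enormZ_sqr; lra.
have := le_trans growth gap; rewrite -!mulr_sumr => bound.
have k_gt0 : 0 < alpha ^+ 2 / 2 by rewrite divr_gt0 ?exprn_gt0.
rewrite ler_pdivlMl ?mulr_gt0 ?invr_gt0 ?ltr0n // -(ler_pM2l k_gt0); lra.
Qed.
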